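(* Let $\mathfrak{H}:\mathcal{M}^{gen}\to\underline{\mathcal{P}}$ be a functor satisfying: (I) for every finite metric space $(X,d_X)$, $\mathfrak{H}(X,d_X)$ is a persistent set $(X,\theta_X^{\mathfrak{H}})$ with underlying set $X$, and for every morphism $f$, $\mathfrak{H}(f)=f$ as a set map; (II) for every $\delta>0$, $\mathfrak{H}(\Delta_2(\delta))=(\{p,q\},\theta)$ where $\theta(t)$ is the partition into singletons for $t<\delta$ and the single-block partition $\{\{p,q\}\}$ for $t\geq\delta$; (III) for every finite metric space $(X,d_X)$ and every $t<\mathrm{sep}(X)$, $\theta_X^{\mathfrak{H}}(t)$ is the partition of $X$ into singletons. Then $\mathfrak{H}=\mathfrak{R}$, i.e. for every finite metric space $(X,d_X)$ and every $r\geq0$, $\theta_X^{\mathfrak{H}}(r)$ is the partition of $X$ into the equivalence classes of $\sim_r$.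
   Context: $\mathcal{M}^{gen}$ is the category whose objects are finite metric spaces and whose morphisms are distance non-increasing maps. A persistent set is a pair $(X,\theta_X)$ with $X$ a finite set and $\theta_X:[0,\infty)\to\mathcal{P}(X)$ (partitions of $X$) such that $\theta_X(r)$ refines $\theta_X(s)$ whenever $r\leq s$, and for every $r$ there is $\epsilon>0$ with $\theta_X(r')=\theta_X(r)$ for all $r'\in[r,r+\epsilon]$. $\underline{\mathcal{P}}$ is the category of persistent sets whose morphisms $(X,\theta_X)\to(Y,\theta_Y)$ are set maps $f:X\to Y$ such that for every $r$, $\theta_X(r)$ refines $f^*(\theta_Y(r))$, where $f^*(P)$ is the partition of $X$ with blocks the nonempty preimages $f^{-1}(B)$, $B\in P$. $\Delta_2(\delta)$ is the metric space on $\{p,q\}$ with $d(p,q)=\delta$. $\mathrm{sep}(X)=\min_{x\neq x'}d_X(x,x')$. For $r\geq0$, $x\sim_r x'$ iff there exist $x_0=x,\ldots,x_k=x'$ in $X$ with $d_X(x_i,x_{i+1})\leq r$ for all $i$; $\mathfrak{R}(X,d_X)=(X,\theta^{\mathrm{VR}}_X)$ with $\theta^{\mathrm{VR}}_X(r)$ the partition into $\sim_r$-classes. *)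

From mathcomp Require Import all_boot all_order all_algebra.
From mathcomp Require Import reals.
Set Implicit Arguments. Unset Strict Implicit. Unset Printing Implicit Defensive.
Import Order.TTheory GRing.Theory Num.Theory.
Local Open Scope ring_scope.

Section Defs.
Variable R : realType.

Definition is_metric (T : finType) (d : T -> T -> R) : Prop :=
  (forall x y, 0 <= d x y) /\ (forall x y, d x y = 0 <-> x = y) /\
  (forall x y, d x y = d y x) /\ (forall x y z, d x z <= d x y + d y z).

Definition nonexpansive (T U : finType) (dT : T -> T -> R) (dU : U -> U -> R)
  (f : T -> U) : Prop := forall x x', dU (f x) (f x') <= dT x x'.

Definition refines (T : finType) (P Q : {set {set T}}) : Prop :=
  forall B, B \in P -> exists2 C, C \in Q & B \subset C.

Definition pullback_partition (T U : finType) (f : T -> U) (Q : {set {set U}})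
  : {set {set T}} := [set f @^-1: B | B : {set U} in Q & f @^-1: B != set0].

Definition persistent_set (T : finType) (theta : R -> {set {set T}}) : Prop :=
  (forall r, 0 <= r -> partition (theta r) [set: T]) /\
  (forall r s, 0 <= r -> r <= s -> refines (theta r) (theta s)) /\
  (forall r, 0 <= r -> exists2 eps, 0 < eps &
      forall r', r <= r' -> r' <= r + eps -> theta r' = theta r).

Definition singleton_partition (T : finType) : {set {set T}} :=
  [set [set x] | x : T].

(* Delta_2(delta) on {p,q} = bool *)
Definition delta2 (delta : R) (x y : bool) : R := if x == y then 0 else delta.

Definition sim_r (T : finType) (d : T -> T -> R) (r : R) : rel T :=
  connect (fun a b => d a b <= r).

Definition vr_partition (T : finType) (d : T -> T -> R) (r : R)
  : {set {set T}} := [set [set y | sim_r d r x y] | x : T].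

End Defs.

From mathcomp Require Import all_boot all_order all_algebra.
From mathcomp Require Import reals.
From mathcomp Require Import lra.
Import Order.TTheory GRing.Theory Num.Theory.
Local Open Scope ring_scope.

(* Points at distance at most r lie in one block of theta(r):
   the map Delta_2(d x y) -> X hitting x and y is nonexpansive, and at scale
   r >= d x y the source is a single block, which functoriality pushes into
   one block of theta(r); blocks being closed under such steps, they contain
   whole ~_r classes. Conversely, collapsing X onto its set of ~_r classes,
   with the discrete metric at the smallest distance c > r between distinct
   classes, is nonexpansive; by (III) the target is discrete at scale r, so
   each block of theta(r) lies in one ~_r class. *)

Definition discrete_dist {R : realType} {T : finType} (c : R) (x y : T) : R :=
  if x == y then 0 else c.

Lemma discrete_metric {R : realType} {T : finType} (c : R) :
  0 < c -> is_metric (@discrete_dist R T c).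
Proof.
move=> c_gt0; rewrite /is_metric /discrete_dist; split; last split; last split.
- by move=> x y; case: eqP => _ //; exact: ltW.
- by move=> x y; case: eqP => // ne; split => // /eqP; rewrite gt_eqF.
- by move=> x y; rewrite eq_sym.
- move=> x y z; case: (x =P z); case: (x =P y); case: (y =P z) => *;
    subst; try congruence; lra.
Qed.

Lemma delta2_metric {R : realType} {delta : R} :
  0 < delta -> is_metric (delta2 delta).
Proof. exact: (@discrete_metric R bool). Qed.

Lemma refines_pullback {T U : finType} {f : T -> U} {P : {set {set T}}}
    {Q : {set {set U}}} (B : {set T}) :
  refines P (pullback_partition f Q) -> B \in P ->
  exists2 C, C \in Q & forall x, x \in B -> f x \in C.
Proof.
move=> PQ /PQ [C' /imsetP[C]]; rewrite inE => /andP[QC _] -> BC.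
by exists C => // x /(subsetP BC); rewrite inE.
Qed.

Lemma partition_classesE (T : finType) (P : {set {set T}}) (e : rel T) :
  partition P [set: T] -> (forall x y, (y \in pblock P x) = e x y) ->
  P = [set [set y | e x y] | x : T].
Proof.
move=> partP blockE; rewrite -(equivalence_partition_pblock partP).
apply/setP => B; apply/imsetP/imsetP => -[x _ ->]; exists x => //;
  by apply/setP => y; rewrite !inE blockE.
Qed.

Section SimR.
Context {R : realType} {T : finType} {d : T -> T -> R} (r : R).
Hypothesis d_metric : is_metric d.

Lemma sim_r_sym : connect_sym (fun a b => d a b <= r).
Proof.
case: d_metric => _ [_ [d_sym _]].
by apply: sym_connect_sym => a b; rewrite d_sym.
Qed.

(* c is the minimum of the distances between ~_r-inequivalent points, or
   r + 1 if there are none. *)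
Lemma sim_r_gap :
  exists2 c, r < c & forall a b, ~~ sim_r d r a b -> c <= d a b.
Proof.
pose c := \big[Num.min/(r + 1)]_(p : T * T | ~~ sim_r d r p.1 p.2) d p.1 p.2.
exists c.
  apply: (big_ind (fun v => r < v)); first by rewrite ltrDl.
    by move=> u v ru rv; rewrite lt_min ru rv.
  move=> [a b] /= nab; rewrite ltNge; apply: contra nab => ab.
  exact: connect1.
by move=> a b nab; rewrite /c (bigD1 (a, b)) //= ge_min lexx.
Qed.

Lemma sim_r_class_nonexpansive {c : R} :
  (forall a b, ~~ sim_r d r a b -> c <= d a b) ->
  nonexpansive d (discrete_dist c) (fun a => [set z | sim_r d r a z]).
Proof.
case: d_metric => d_ge0 _ gap a b; rewrite /discrete_dist.
case: eqP => [_ | ne]; first exact: d_ge0.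
apply: gap; apply/negP => ab; apply: ne; apply/setP => z; rewrite !inE.
by apply/idP/idP; apply: connect_trans; rewrite // sim_r_sym.
Qed.

End SimR.

Section Uniqueness.
Variables (R : realType) (H : forall T : finType, (T -> T -> R) -> R -> {set {set T}}).
Hypothesis H_persistent : forall (T : finType) (d : T -> T -> R),
  is_metric d -> persistent_set (H T d).
Hypothesis H_functorial : forall (T U : finType) (dT : T -> T -> R)
  (dU : U -> U -> R) (f : T -> U), is_metric dT -> is_metric dU ->
  nonexpansive dT dU f ->
  forall r, 0 <= r -> refines (H T dT r) (pullback_partition f (H U dU r)).
Hypothesis H_delta2 : forall delta : R, 0 < delta -> forall t : R, 0 <= t ->
  H bool (delta2 delta) t =
    if t < delta then singleton_partition bool else [set [set: bool]].
Hypothesis H_sep : forall (T : finType) (d : T -> T -> R), is_metric d ->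
  forall t : R, 0 <= t -> (forall x y, x != y -> t < d x y) ->
  H T d t = singleton_partition T.

Variables (T : finType) (d : T -> T -> R) (r : R).
Hypotheses (d_metric : is_metric d) (r_ge0 : 0 <= r).

Let P := H T d r.

Lemma H_partition : partition P [set: T].
Proof. by case: (H_persistent _ _ d_metric) => + _; apply. Qed.

Lemma cover_H x : x \in cover P.
Proof. by case/and3P: H_partition => /eqP ->; rewrite inE. Qed.

Lemma pblock_H_sim_r x y : y \in pblock P x -> sim_r d r x y.
Proof.
move=> y_x; have [c r_lt_c gap] := sim_r_gap (d := d) r.
have c_gt0 : 0 < c by apply: le_lt_trans r_lt_c.
have class_discrete : H _ (discrete_dist c) r = singleton_partition {set T}.
  apply: H_sep => //; first exact: discrete_metric.
  by move=> A B /negbTE AB; rewrite /discrete_dist AB.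
have := H_functorial _ _ _ _ _ d_metric (discrete_metric (T := {set T}) c c_gt0)
  (sim_r_class_nonexpansive r d_metric gap) _ r_ge0.
rewrite class_discrete => /refines_pullback/(_ (pblock_mem (cover_H x))).
case=> _ /imsetP[A _ ->] inA.
have /inA /set1P class_x : x \in pblock P x by rewrite mem_pblock cover_H.
have /set1P class_y := inA _ y_x.
have : y \in [set z | sim_r d r y z] by rewrite inE; exact: connect0.
by rewrite class_y -class_x inE.
Qed.

Lemma close_in_pblock_H x y : d x y <= r -> y \in pblock P x.
Proof.
case: d_metric => d_ge0 [d_eq0 [d_sym _]] xy.
have [<- | x_ne_y] := eqVneq x y; first by rewrite mem_pblock cover_H.
have dxy_gt0 : 0 < d x y.
  by rewrite lt_def d_ge0 andbT; apply: contra x_ne_y => /eqP/d_eq0->.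
pose f (v : bool) := if v then x else y.
have f_nonexp : nonexpansive (delta2 (d x y)) d f.
  have d_refl z : d z z = 0 by apply/d_eq0.
  by move=> [] [] /=; rewrite /delta2 /= ?d_refl // d_sym.
have := H_functorial _ _ _ _ _ (delta2_metric dxy_gt0) d_metric f_nonexp _ r_ge0.
rewrite H_delta2 // ltNge xy /= => /(refines_pullback [set: bool]).
case=> [|B PB inB]; first by rewrite inE.
have [_ tiP _] := and3P H_partition.
by rewrite (def_pblock tiP PB (inB true _)) ?(inB false) ?inE.
Qed.

Lemma mem_pblock_H x y : (y \in pblock P x) = sim_r d r x y.
Proof.
apply/idP/idP; first exact: pblock_H_sim_r.
have [_ tiP _] := and3P H_partition.
have closed_block : closed (fun a b => d a b <= r) (pblock P x).
  apply: intro_closed; first exact: sim_r_sym.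
  by move=> a b /close_in_pblock_H ab a_x; rewrite -(same_pblock tiP a_x).
by move/(closed_connect closed_block); rewrite mem_pblock cover_H.
Qed.

Lemma H_vr_partition : H T d r = vr_partition d r.
Proof. exact: partition_classesE H_partition mem_pblock_H. Qed.

End Uniqueness.

Theorem mainTheorem9 (R : realType)
  (H : forall T : finType, (T -> T -> R) -> R -> {set {set T}})
  (Hpers : forall (T : finType) (d : T -> T -> R),
      is_metric d -> persistent_set (H T d))
  (Hfun : forall (T U : finType) (dT : T -> T -> R) (dU : U -> U -> R)
      (f : T -> U), is_metric dT -> is_metric dU -> nonexpansive dT dU f ->
      forall r, 0 <= r -> refines (H T dT r) (pullback_partition f (H U dU r)))
  (H2 : forall delta : R, 0 < delta -> forall t : R, 0 <= t ->
      H bool (delta2 delta) t =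
        if t < delta then singleton_partition bool else [set [set: bool]])
  (H3 : forall (T : finType) (d : T -> T -> R), is_metric d ->
      forall t : R, 0 <= t -> (forall x y, x != y -> t < d x y) ->
      H T d t = singleton_partition T) :
  forall (T : finType) (d : T -> T -> R), is_metric d ->
  forall r : R, 0 <= r -> H T d r = vr_partition d r.
Proof. by move=> T d d_metric r r_ge0; apply: H_vr_partition. Qed.
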